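(* Let $\nu$ be a probability measure on $\mathbb R$ with finite moments of all orders, and let $\{P_n\}_{n\ge0}$ be the monic orthogonal polynomials of $\nu$, satisfying $P_0=1$, $P_{-1}=0$ and $P_{n+1}(x)=(x-\alpha_{n+1})P_n(x)-\beta_nP_{n-1}(x)$ for $n\ge0$, with all $\beta_n\ge0$. Let $H(x,z)=\sum_{n\ge0}P_n(x)z^n$. (1) $H(x,z)=\frac{1}{u(z)(f(z)-x)}$ for some $u,f$ such that $u$ and $uf$ are formal power series with $u\in\mathcal P_{0,1}$ and $(uf)(0)=1$ if and only if there exist $\alpha,\alpha',\beta,\beta'$ with $\beta\ge0$, $\beta-\beta'\ge0$ such that $\alpha_n=\alpha-\delta_{n1}\alpha'$ and $\beta_n=\beta-\delta_{n1}\beta'$ for all $n\ge1$. (2) In this case $f=K_\nu\circ u$. (3) In this case, with $Q_n(x)=U_n(x-\alpha,\beta)$, one has $P_0=Q_0$, $P_1=Q_1+\alpha'Q_0$, and $P_n=Q_n+\alpha'Q_{n-1}+\beta'Q_{n-2}$ for $n>1$.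
   Context: $\mathcal P_{0,1}$ denotes formal power series $u(z)$ with $u(0)=0$, $u'(0)=1$. $G_\nu(z)=\sum_{n\ge0}m_n(\nu)z^{-(n+1)}$ is the Cauchy transform of $\nu$ ($m_n$ its moments) and $K_\nu$ its inverse under composition (a series $\frac1z+\sum_{n\ge1}c_nz^{n-1}$). Chebyshev polynomials of the second kind: $U_n(2\cos\theta)=\frac{\sin(n+1)\theta}{\sin\theta}$, $U_n(x,t)=t^{n/2}U_n(x/\sqrt t)$, and $U_n(x-\alpha,\beta)$ means $U_n(\cdot,\beta)$ evaluated at $x-\alpha$; these satisfy $Q_{n+1}=(x-\alpha)Q_n-\beta Q_{n-1}$. *)

From HB Require Import structures.
From mathcomp Require Import all_boot all_order all_algebra.
From mathcomp Require Import all_classical all_reals all_analysis.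
Set Implicit Arguments. Unset Strict Implicit. Unset Printing Implicit Defensive.
Import Order.TTheory GRing.Theory Num.Theory.
Local Open Scope ring_scope.

Section Series.
Variable K : comNzRingType.
Definition fps := nat -> K.
Definition sone : fps := fun n => (n == 0%N)%:R.
Definition sX : fps := fun n => (n == 1%N)%:R.
Definition smul (a b : fps) : fps :=
  fun n => \sum_(i < n.+1) a i * b (n - i)%N.
Definition sadd (a b : fps) : fps := fun n => a n + b n.
Definition sscale (x : K) (a : fps) : fps := fun n => x * a n.
Definition spow (a : fps) (k : nat) : fps := iter k (smul a) sone.
(* composition a(b(z)); meaningful when b 0 = 0 (then it is the usual
   formal composition, since b^k has no terms of degree < k) *)
Definition scomp (a b : fps) : fps :=
  fun n => \sum_(k < n.+1) a k * spow b k n.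
End Series.

Section OP.
Variable R : realType.

Fixpoint OPpair (alpha beta : nat -> R) (n : nat) : {poly R} * {poly R} :=
  (* returns (P_n, P_{n-1}) *)
  match n with
  | 0%N => (1, 0)
  | n'.+1 => let: (p, q) := OPpair alpha beta n' in
             (('X - (alpha n)%:P) * p - beta n' *: q, p)
  end.
Definition OP (alpha beta : nat -> R) (n : nat) : {poly R} := (OPpair alpha beta n).1.

(* H(x,z) = sum_n P_n(x) z^n, a fps in z with coefficients in R[x] *)
Definition Hgen (alpha beta : nat -> R) : fps {poly R} := OP alpha beta.

(* Chebyshev polynomials of the second kind in two variables,
   U_n(x,t) = t^{n/2} U_n(x/sqrt t), given as polynomials in x with
   parameter t by U_0 = 1, U_1 = x, U_{n+1} = x U_n - t U_{n-1}. *)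
Fixpoint Upair (t : R) (n : nat) : {poly R} * {poly R} :=
  match n with
  | 0%N => (1, 0)
  | n'.+1 => let: (p, q) := Upair t n' in ('X * p - t *: q, p)
  end.
Definition Ucheb2 (t : R) (n : nat) : {poly R} := (Upair t n).1.
Definition Ushift (a t : R) (n : nat) : {poly R} := Ucheb2 t n \Po ('X - a%:P).

Definition moment (P : probability R R) (n : nat) : R :=
  fine (\int[P]_x ((x ^+ n)%:E))%E.

(* Series of K_nu:  K_nu(z) = 1/z + sum_{n>=1} c_n z^{n-1} = kser c (z) / z *)
Definition kser (c : nat -> R) : fps R := fun n => if n is 0%N then 1 else c n.

(* Ghat(t) = sum_n m_n t^{n+1}, so that G_nu(w) = Ghat(1/w). *)
Definition Ghat (m : nat -> R) : fps R := fun n => if n is n'.+1 then m n' else 0.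

(* c are the coefficients of the compositional inverse K_nu of G_nu:
   G_nu(K_nu(z)) = z.  Since 1/K_nu(z) = z * psi(z) with psi = 1/kser c,
   this reads Ghat(z psi(z)) = z. *)
Definition is_Kcoeffs (m c : nat -> R) : Prop :=
  exists psi : fps R,
    smul (kser c) psi = sone R /\ scomp (Ghat m) (smul (sX R) psi) = sX R.

(* H(x,z) = 1/(u(z)(f(z) - x)) with g = u f:   H * (g - u x) = 1
   in R[x][[z]]. *)
Definition Hform (H : fps {poly R}) (u g : fps R) : Prop :=
  smul H (fun n => (g n)%:P - u n *: 'X) = sone {poly R}.

End OP.

(* Everything is an identity between formal power series in z (handled through
   their polynomial truncations); with g = u f, H = 1/(u (f - x)) means
   H (g - x u) = 1.
   (1), (3): in H (g - x u) = 1 the coefficients of x^(k+1) z^(k+2) and of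
   x^(k+1) z^(k+3) involve only the three or four top coefficients of the monic
   P_n, and show that alpha_n, beta_n do not depend on n >= 2.  Conversely, if
   they equal a, b from n = 2 on, the recurrence gives
   H (1 - (x - a) z + b z^2) = N := 1 + a' z + b' z^2; since
   1/(1 - (x - a) z + b z^2) generates the Q_n, this is (3), and u = z/N,
   g = (1 + a z + b z^2)/N solve (1).
   (2): apply the moment functional L coefficientwise in z.  Orthogonality gives
   L[H] = 1, while H g = 1/(1 - x t) = sum_k x^k t^k with t = u/g; hence
   g = sum_k m_k t^k, i.e. Ghat(t) = u where Ghat(z) = G_nu(1/z).  When
   Ghat(z psi) = z, the series z psi is also a left inverse of Ghat (right
   inverses exist by a z-adic contraction argument), so t = u (psi o u), that is
   1/g = psi o u and g = (1/psi) o u. *)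

From HB Require Import structures.
From mathcomp Require Import all_boot all_order all_algebra.
From mathcomp Require Import all_classical all_reals all_analysis.
From mathcomp Require Import ring lra zify.
Import Order.TTheory GRing.Theory Num.Theory.
Set Implicit Arguments. Unset Strict Implicit. Unset Printing Implicit Defensive.
Local Open Scope ring_scope.

Section TakePoly.
Variable K : comNzRingType.
Implicit Types p q : {poly K}.

Lemma take_polyMl N p q : take_poly N (take_poly N p * q) = take_poly N (p * q).
Proof.
apply/polyP => i; rewrite !coef_take_poly; case: ifP => // iN.
rewrite !coefM; apply: eq_bigr => j _; rewrite coef_take_poly.
by rewrite (leq_ltn_trans _ iN) // -ltnS.
Qed.

Lemma take_polyMr N p q : take_poly N (p * take_poly N q) = take_poly N (p * q).
Proof. by rewrite mulrC take_polyMl mulrC. Qed.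

Lemma take_polyXr N p k : take_poly N (take_poly N p ^+ k) = take_poly N (p ^+ k).
Proof.
elim: k => [|k IHk]; first by rewrite !expr0.
by rewrite !exprS -take_polyMr IHk take_polyMr take_polyMl.
Qed.

Lemma take_poly_compr N p q :
  take_poly N (p \Po take_poly N q) = take_poly N (p \Po q).
Proof.
rewrite !comp_polyE !take_poly_sum; apply: eq_bigr => i _.
by rewrite !take_polyZ take_polyXr.
Qed.

Lemma take_poly_compl N p q : q`_0 = 0 ->
  take_poly N (take_poly N p \Po q) = take_poly N (p \Po q).
Proof.
move=> q0; have [r ->] : exists r, q = r * 'X.
  exists (drop_poly 1 q); rewrite -[LHS](poly_take_drop 1 q) expr1.
  suff -> : take_poly 1 q = 0 by rewrite add0r.
  by apply/polyP => -[|i]; rewrite coef_take_poly coef0.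
rewrite -[in RHS](poly_take_drop N p) comp_polyD take_polyD comp_polyM.
by rewrite rmorphXn /= comp_polyX exprMn mulrA take_polyMXn_0 addr0.
Qed.

End TakePoly.

Section FpsRing.
Variable K : comNzRingType.
Implicit Types a b c : fps K.

Definition fps_trunc N a : {poly K} := \poly_(i < N) a i.

Lemma coef_fps_trunc N a i : (fps_trunc N a)`_i = if (i < N)%N then a i else 0.
Proof. exact: coef_poly. Qed.

Lemma fps_trunc_inj a b : (forall N, fps_trunc N a = fps_trunc N b) -> a = b.
Proof.
move=> eq_ab; apply: funext => n.
by have /polyP/(_ n) := eq_ab n.+1; rewrite !coef_fps_trunc ltnSn.
Qed.

Lemma take_fps_trunc N a : take_poly N (fps_trunc N a) = fps_trunc N a.
Proof. by rewrite take_poly_id // size_poly. Qed.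

Lemma fps_trunc_smul N a b :
  fps_trunc N (smul a b) = take_poly N (fps_trunc N a * fps_trunc N b).
Proof.
apply/polyP => i; rewrite coef_fps_trunc coef_take_poly coefM; case: ifP => // iN.
apply: eq_bigr => -[j /= lt_ji] _; rewrite !coef_fps_trunc.
have ltjN : (j < N)%N by apply: leq_ltn_trans iN; rewrite -ltnS.
by rewrite ltjN (leq_ltn_trans (leq_subr j i) iN).
Qed.

Lemma fps_trunc_sadd N a b :
  fps_trunc N (sadd a b) = fps_trunc N a + fps_trunc N b.
Proof. by apply/polyP => i; rewrite coefD !coef_fps_trunc; case: ifP; rewrite ?addr0. Qed.

Lemma fps_trunc_sone N : fps_trunc N (sone K) = take_poly N 1.
Proof. by apply/polyP => i; rewrite coef_fps_trunc coef_take_poly coef1. Qed.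

Lemma smulA : associative (@smul K).
Proof.
move=> a b c; apply: fps_trunc_inj => N.
by rewrite !fps_trunc_smul take_polyMl take_polyMr mulrA.
Qed.

Lemma smulC : commutative (@smul K).
Proof. by move=> a b; apply: fps_trunc_inj => N; rewrite !fps_trunc_smul mulrC. Qed.

Lemma smul1 : left_id (sone K) (@smul K).
Proof.
move=> a; apply: fps_trunc_inj => N.
by rewrite fps_trunc_smul fps_trunc_sone take_polyMl mul1r take_fps_trunc.
Qed.

Lemma smulDl : left_distributive (@smul K) (@sadd K).
Proof.
move=> a b c; apply: fps_trunc_inj => N.
by rewrite fps_trunc_sadd !fps_trunc_smul fps_trunc_sadd mulrDl take_polyD.
Qed.

Definition szero : fps K := fun _ => 0.
Definition sopp a : fps K := fun n => - a n.

Lemma saddA : associative (@sadd K).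
Proof. by move=> a b c; apply: funext => n; apply: addrA. Qed.
Lemma saddC : commutative (@sadd K).
Proof. by move=> a b; apply: funext => n; apply: addrC. Qed.
Lemma sadd0 : left_id szero (@sadd K).
Proof. by move=> a; apply: funext => n; apply: add0r. Qed.
Lemma saddN : left_inverse szero sopp (@sadd K).
Proof. by move=> a; apply: funext => n; apply: addNr. Qed.

Lemma sone_neq0 : sone K != szero.
Proof. by apply/eqP => /(congr1 (fun a => a 0%N))/eqP; rewrite oner_eq0. Qed.

HB.instance Definition _ := gen_eqMixin (fps K).
HB.instance Definition _ := gen_choiceMixin (fps K).
HB.instance Definition _ := GRing.isZmodule.Build (fps K) saddA saddC sadd0 saddN.
HB.instance Definition _ :=
  GRing.Zmodule_isComNzRing.Build (fps K) smulA smulC smul1 smulDl sone_neq0.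

Lemma fps_coefD a b n : (a + b) n = a n + b n. Proof. by []. Qed.
Lemma fps_coefN a n : (- a) n = - a n. Proof. by []. Qed.
Lemma fps_coefB a b n : (a - b) n = a n - b n. Proof. by []. Qed.
Lemma fps_coef1 n : (1 : fps K) n = (n == 0%N)%:R. Proof. by []. Qed.

Lemma fps_coefM a b n : (a * b) n = \sum_(i < n.+1) a i * b (n - i)%N.
Proof. by []. Qed.

Lemma fps_trunc_mul N a b :
  fps_trunc N (a * b) = take_poly N (fps_trunc N a * fps_trunc N b).
Proof. exact: fps_trunc_smul. Qed.

Lemma fps_trunc_exp N a k :
  fps_trunc N (a ^+ k) = take_poly N (fps_trunc N a ^+ k).
Proof.
elim: k => [|k IHk]; first exact: fps_trunc_sone.
by rewrite !exprS fps_trunc_mul IHk take_polyMr.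
Qed.

End FpsRing.

Section XadicOrder.
Variable K : comNzRingType.
Implicit Types a b v w y : fps K.

Definition Xn_dvd n a := forall j, (j < n)%N -> a j = 0.

Lemma Xn_dvdW m n a : (m <= n)%N -> Xn_dvd n a -> Xn_dvd m a.
Proof. by move=> le_mn a_n j lt_jm; apply: a_n; apply: leq_trans le_mn. Qed.

Lemma Xn_dvdD n a b : Xn_dvd n a -> Xn_dvd n b -> Xn_dvd n (a + b).
Proof. by move=> a_n b_n j lt_jn; rewrite fps_coefD a_n ?b_n ?addr0. Qed.

Lemma Xn_dvdN n a : Xn_dvd n a -> Xn_dvd n (- a).
Proof. by move=> a_n j lt_jn; rewrite fps_coefN a_n ?oppr0. Qed.

Lemma Xn_dvdM m n a b : Xn_dvd m a -> Xn_dvd n b -> Xn_dvd (m + n) (a * b).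
Proof.
move=> a_m b_n j lt_jmn; rewrite fps_coefM big1 // => -[i /= lt_ij] _.
have [lt_im | le_mi] := ltnP i m; first by rewrite a_m ?mul0r.
by rewrite b_n ?mulr0 //; lia.
Qed.

Lemma Xn_dvdX k a : Xn_dvd 1 a -> Xn_dvd k (a ^+ k).
Proof. by move=> a_1; elim: k => [|k IHk] //; rewrite exprS -add1n; apply: Xn_dvdM. Qed.

Lemma Xn_dvd_eq0 a : (forall n, Xn_dvd n a) -> a = 0.
Proof. by move=> a_n; apply: funext => n; apply: (a_n n.+1). Qed.

Lemma Xn_dvd_expB n k v w : v 0%N = 0 -> w 0%N = 0 -> Xn_dvd n (v - w) ->
  Xn_dvd (n + k) (v ^+ k.+1 - w ^+ k.+1).
Proof.
move=> v0 w0 vw_n; have v_1 : Xn_dvd 1 v by case.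
have w_1 : Xn_dvd 1 w by case.
elim: k => [|k IHk]; first by rewrite addn0 !expr1.
have -> : v ^+ k.+2 - w ^+ k.+2 = v * (v ^+ k.+1 - w ^+ k.+1) + (v - w) * w ^+ k.+1.
  by rewrite !exprS; ring.
apply: Xn_dvdD; first by rewrite addnS -add1n; apply: Xn_dvdM.
by apply: Xn_dvdM => //; apply: Xn_dvdX.
Qed.

End XadicOrder.

Section Composition.
Variable K : comNzRingType.
Implicit Types a b c : fps K.

Lemma spowE b k : spow b k = b ^+ k.
Proof. by elim: k => [|k IHk] //; rewrite /spow iterS -/(spow b k) IHk exprS. Qed.

Lemma coef_scomp a b n : scomp a b n = \sum_(k < n.+1) a k * (b ^+ k) n.
Proof. by apply: eq_bigr => k _; rewrite spowE. Qed.

Lemma fps_trunc_scomp N a b : b 0%N = 0 ->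
  fps_trunc N (scomp a b) = take_poly N (fps_trunc N a \Po fps_trunc N b).
Proof.
move=> b0; apply/polyP => i; rewrite coef_fps_trunc coef_take_poly.
case: ifP => // iN; rewrite coef_scomp [X in X \Po _]poly_def linear_sum coef_sum /=.
rewrite (big_ord_widen N (fun k => a k * (b ^+ k) i) iN) big_mkcond /=.
apply: eq_bigr => -[k ltkN] _ /=; rewrite linearZ /= rmorphXn /= comp_polyX coefZ.
have -> : (fps_trunc N b ^+ k)`_i = (b ^+ k) i.
  by have := coef_fps_trunc N (b ^+ k) i; rewrite iN fps_trunc_exp coef_take_poly iN.
case: ifP => // /negbT; rewrite -leqNgt => lt_ik.
by rewrite (Xn_dvdX (k := k) (_ : Xn_dvd 1 b)) ?mulr0 // => -[].
Qed.

Lemma scompM a1 a2 b : b 0%N = 0 -> scomp (a1 * a2) b = scomp a1 b * scomp a2 b.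
Proof.
move=> b0; apply: fps_trunc_inj => N; have b0N : (fps_trunc N b)`_0 = 0.
  by rewrite coef_fps_trunc; case: ifP.
rewrite fps_trunc_mul !fps_trunc_scomp // fps_trunc_mul take_poly_compl //.
by rewrite comp_polyM take_polyMl take_polyMr.
Qed.

Lemma scompA a b c : b 0%N = 0 -> c 0%N = 0 ->
  scomp (scomp a b) c = scomp a (scomp b c).
Proof.
move=> b0 c0; apply: fps_trunc_inj => N; have c0N : (fps_trunc N c)`_0 = 0.
  by rewrite coef_fps_trunc; case: ifP.
have bc0 : scomp b c 0%N = 0 by rewrite coef_scomp big_ord1 b0 mul0r.
rewrite !fps_trunc_scomp // take_poly_compl // take_poly_compr.
by rewrite comp_polyA.
Qed.

Lemma scompB a1 a2 b : scomp (a1 - a2) b = scomp a1 b - scomp a2 b.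
Proof.
apply: funext => n; rewrite fps_coefB !coef_scomp -sumrB.
by apply: eq_bigr => k _; rewrite mulrBl.
Qed.

Lemma scomp1 b : scomp 1 b = 1.
Proof.
apply: funext => n; rewrite coef_scomp big_ord_recl big1 ?addr0 ?mul1r //.
by move=> k _; rewrite mul0r.
Qed.

Lemma scompX b : b 0%N = 0 -> scomp (sX K) b = b.
Proof.
move=> b0; apply: funext => -[|n]; rewrite coef_scomp ?big_ord1 ?b0 ?mul0r //.
rewrite 2!big_ord_recl big1 ?addr0 => [|k _]; last by rewrite mul0r.
by rewrite mul0r add0r mul1r expr1.
Qed.

Lemma scomp_X a : scomp a (sX K) = a.
Proof.
apply: fps_trunc_inj => N; rewrite fps_trunc_scomp //.
have -> : fps_trunc N (sX K) = take_poly N 'X.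
  by apply/polyP => i; rewrite coef_fps_trunc coef_take_poly coefX.
by rewrite take_poly_compr comp_polyXr take_fps_trunc.
Qed.

End Composition.

Section SpecialSeries.
Variable K : comNzRingType.
Implicit Types a b p w : fps K.

Definition sC (x : K) : fps K := fun n => if n is 0%N then x else 0.

Lemma coef_sCM x a n : (sC x * a) n = x * a n.
Proof.
rewrite fps_coefM big_ord_recl subn0 big1 ?addr0 // => i _.
by rewrite mul0r.
Qed.

Lemma sC1 : sC 1 = 1.
Proof. by apply: funext => -[|n]. Qed.

Lemma sCM x y : sC (x * y) = sC x * sC y.
Proof. by apply: funext => n; rewrite coef_sCM; case: n => [|n] /=; rewrite ?mulr0. Qed.

Lemma sCX x k : sC (x ^+ k) = sC x ^+ k.
Proof. by elim: k => [|k IHk]; rewrite ?sC1 // !exprS sCM IHk. Qed.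

Lemma coef_sXM a n : (sX K * a) n = if n is n'.+1 then a n' else 0.
Proof.
rewrite fps_coefM; case: n => [|n]; first by rewrite big_ord1 mul0r.
rewrite 2!big_ord_recl big1 ?addr0 => [|i _]; last by rewrite mul0r.
by rewrite mul0r add0r mul1r subSS subn0.
Qed.

Definition sdivX a : fps K := fun n => a n.+1.

Lemma sdivXB a b : sdivX (a - b) = sdivX a - sdivX b.
Proof. by []. Qed.

Lemma sXM_sdivX a : a 0%N = 0 -> sX K * sdivX a = a.
Proof. by move=> a0; apply: funext => -[|n]; rewrite coef_sXM. Qed.

Lemma sdivX_sXM a : sdivX (sX K * a) = a.
Proof. by apply: funext => n; rewrite /sdivX coef_sXM. Qed.

Lemma sXM_inj : injective (fun a => sX K * a).
Proof. by move=> a b /(congr1 sdivX); rewrite !sdivX_sXM. Qed.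

Definition geom : fps K := fun _ => 1.

Lemma scomp_geomV w : w 0%N = 0 -> (1 - w) * scomp geom w = 1.
Proof.
move=> w0; have geomE : (1 - sX K) * geom = 1.
  by apply: funext => -[|n]; rewrite mulrBl mul1r fps_coefB coef_sXM ?subr0 ?subrr.
have -> : 1 - w = scomp (1 - sX K) w by rewrite scompB scomp1 scompX.
by rewrite -scompM // geomE scomp1.
Qed.

Definition fps_inv p : fps K := scomp geom (1 - p).

Lemma fps_mulV p : p 0%N = 1 -> p * fps_inv p = 1.
Proof.
by move=> p0; rewrite -{1}(subKr 1 p) scomp_geomV // fps_coefB p0 subrr.
Qed.

Lemma fps_inv0 p : fps_inv p 0%N = 1.
Proof. by rewrite /fps_inv coef_scomp big_ord1 mul1r. Qed.

Lemma order1_mulI (u a b : fps K) :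
  u 0%N = 0 -> u 1%N = 1 -> u * a = u * b -> a = b.
Proof.
move=> u0 u1; rewrite -(sXM_sdivX u0) -!mulrA => /sXM_inj eq_ab.
have /fps_mulV inv_u : sdivX u 0%N = 1 by [].
by rewrite -[a]mul1r -inv_u mulrAC eq_ab mulrAC inv_u mul1r.
Qed.

End SpecialSeries.

Arguments geom {K}.

Section CompositionalInverse.
Variable K : comNzRingType.
Implicit Types a b v w y : fps K.

Lemma Xn_dvd_scompB n a v w : v 0%N = 0 -> w 0%N = 0 -> Xn_dvd n (v - w) ->
  Xn_dvd n.+1 (scomp a v - scomp a w - sC (a 1%N) * (v - w)).
Proof.
move=> v0 w0 vw_n j lt_jn; rewrite !fps_coefB coef_sCM !coef_scomp -sumrB.
case: j lt_jn => [|j] lt_jn.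
  by rewrite big_ord1 !expr0 subrr fps_coefB v0 w0 subrr mulr0 subr0.
rewrite 2!big_ord_recl !expr0 !expr1 subrr add0r big1 ?addr0 => [|i _].
  by rewrite fps_coefB mulrBr subrr.
by rewrite -mulrBr -fps_coefB (Xn_dvd_expB (k := i.+1) v0 w0 vw_n) ?mulr0 //; lia.
Qed.

Section ContractionFixpoint.
Variable Phi : fps K -> fps K.
Hypothesis Phi_contr :
  forall n y y', Xn_dvd n (y - y') -> Xn_dvd n.+1 (Phi y - Phi y').

Lemma fps_contraction_fixpoint : exists y, Phi y = y.
Proof.
pose x k := iter k Phi 0.
have x_step k : Xn_dvd k (x k.+1 - x k).
  by elim: k => [|k IHk] //; apply: Phi_contr.
have x_cauchy k l : (k <= l)%N -> Xn_dvd k (x l - x k).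
  move=> /subnK <-; elim: (l - k)%N => [|d IHd]; first by rewrite add0n subrr.
  rewrite addSn -(subrK (x (d + k)%N) (x (d + k).+1)) -addrA.
  by apply: Xn_dvdD => //; apply: Xn_dvdW (x_step _); apply: leq_addl.
pose y j := x j.+1 j.
have y_x k : Xn_dvd k (y - x k).
  move=> j lt_jk; have := x_cauchy j.+1 k lt_jk j (ltnSn j).
  by rewrite !fps_coefB => /eqP; rewrite subr_eq0 => /eqP ->; rewrite subrr.
exists y; apply/eqP; rewrite -subr_eq0; apply/eqP/Xn_dvd_eq0 => k.
have -> : Phi y - y = (Phi y - Phi (x k)) + (Phi (x k) - x k) - (y - x k) by ring.
apply: Xn_dvdD; last exact/Xn_dvdN/y_x.
by apply: Xn_dvdD (x_step k); apply: Xn_dvdW (Phi_contr (y_x k)); apply: leqnSn.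
Qed.

End ContractionFixpoint.

Lemma scomp0 a v : a 0%N = 0 -> scomp a v 0%N = 0.
Proof. by move=> a0; rewrite coef_scomp big_ord1 a0 mul0r. Qed.

Lemma scomp_rinv a : a 0%N = 0 -> a 1%N = 1 ->
  exists y, y 0%N = 1 /\ scomp a (sX K * y) = sX K.
Proof.
(* [Phi y = y] says [a (X y) = X]; [Phi] contracts because [a 1 = 1]. *)
move=> a0 a1; pose Phi y : fps K := y + 1 - sdivX (scomp a (sX K * y)).
have [y Phi_y] : exists y, Phi y = y.
  apply: fps_contraction_fixpoint => n y y' yy'_n.
  have X0 z : (sX K * z) 0%N = 0 by rewrite coef_sXM.
  have XyXy' : Xn_dvd n.+1 (sX K * y - sX K * y').
    by move=> [|j] lt_jn; rewrite -mulrBr coef_sXM // yy'_n.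
  have -> : Phi y - Phi y' = - sdivX (scomp a (sX K * y) - scomp a (sX K * y')
                              - sC (a 1%N) * (sX K * y - sX K * y')).
    by rewrite a1 sC1 mul1r -mulrBr !sdivXB sdivX_sXM /Phi; ring.
  by apply/Xn_dvdN => j lt_jn; apply: (Xn_dvd_scompB a (X0 y) (X0 y') XyXy').
have drop1 : sdivX (scomp a (sX K * y)) = 1.
  by apply: (addrI y); rewrite -{1}Phi_y /Phi; ring.
exists y; split; last by rewrite -(sXM_sdivX (scomp0 _ a0)) drop1 mulr1.
have := congr1 (fun b => b 0%N) drop1; rewrite /sdivX /= coef_scomp.
by rewrite 2!big_ord_recl big_ord0 a0 a1 mul0r add0r addr0 mul1r expr1 coef_sXM.
Qed.

Lemma scomp_linv a b : a 0%N = 0 -> b 0%N = 0 -> b 1%N = 1 ->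
  scomp a b = sX K -> scomp b a = sX K.
Proof.
move=> a0 b0 b1 ab; have [y [_ b_y]] := scomp_rinv b0 b1.
have Xy0 : (sX K * y) 0%N = 0 by rewrite coef_sXM.
suff -> : a = sX K * y by [].
by rewrite -[LHS]scomp_X -[X in scomp a X]b_y -scompA // ab scompX.
Qed.

End CompositionalInverse.

Section Quadratic.
Variable K : comNzRingType.
Implicit Types a : fps K.

Definition quad (c0 c1 c2 : K) : fps K := fun n => nth 0 [:: c0; c1; c2] n.

Lemma coef_mul_quad0 a (c0 c1 c2 : K) : (a * quad c0 c1 c2) 0%N = a 0%N * c0.
Proof. by rewrite fps_coefM big_ord1. Qed.

Lemma coef_mul_quad1 a (c0 c1 c2 : K) :
  (a * quad c0 c1 c2) 1%N = a 1%N * c0 + a 0%N * c1.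
Proof. by rewrite fps_coefM 2!big_ord_recl big_ord0 addr0 addrC. Qed.

Lemma coef_mul_quadSS a (c0 c1 c2 : K) n :
  (a * quad c0 c1 c2) n.+2 = a n.+2 * c0 + a n.+1 * c1 + a n * c2.
Proof.
rewrite mulrC fps_coefM 3!big_ord_recl big1 ?addr0 => [|i _].
  by rewrite /= !subSS !subn0 /= mulrC addrA; congr (_ + _ + _); apply: mulrC.
by rewrite !lift0 /quad /= nth_nil mul0r.
Qed.

End Quadratic.

Section FpsMap.
Variables (K K' : comNzRingType) (f : {rmorphism K -> K'}).

Definition fps_map (a : fps K) : fps K' := fun n => f (a n).

Lemma fps_mapB : zmod_morphism fps_map.
Proof. by move=> a b; apply: funext => n; rewrite /fps_map /= !fps_coefB rmorphB. Qed.

Lemma fps_mapM : monoid_morphism fps_map.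
Proof.
split=> [|a b]; apply: funext => n; rewrite /fps_map ?fps_coef1 ?rmorph_nat //.
by rewrite !fps_coefM rmorph_sum; apply: eq_bigr => i _; rewrite rmorphM.
Qed.

HB.instance Definition _ := GRing.isZmodMorphism.Build (fps K) (fps K') fps_map fps_mapB.
HB.instance Definition _ := GRing.isMonoidMorphism.Build (fps K) (fps K') fps_map fps_mapM.

Lemma fps_map_quad (c0 c1 c2 : K) : fps_map (quad c0 c1 c2) = quad (f c0) (f c1) (f c2).
Proof. by apply: funext => -[|[|[|n]]]; rewrite /fps_map /quad /= ?nth_nil ?rmorph0. Qed.

End FpsMap.

Section ThreeTermRecurrence.
Variable R : realType.
Variables alpha beta : nat -> R.
Local Notation P := (OP alpha beta).

Lemma OP0 : P 0 = 1.
Proof. by []. Qed.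

Lemma OP1 : P 1 = 'X - (alpha 1%N)%:P.
Proof. by rewrite /OP /= scaler0 subr0 mulr1. Qed.

Lemma OPSS n : P n.+2 = ('X - (alpha n.+2)%:P) * P n.+1 - beta n.+1 *: P n.
Proof. by rewrite /OP /=; case: (OPpair alpha beta n). Qed.

Lemma coef_OPSS n j : (P n.+2)`_j.+1 =
  (P n.+1)`_j - alpha n.+2 * (P n.+1)`_j.+1 - beta n.+1 * (P n)`_j.+1.
Proof. by rewrite OPSS coefB coefZ mulrBl coefB coefXM coefCM. Qed.

Lemma OP_size_monic n : size (P n) = n.+1 /\ P n \is monic.
Proof.
suff IH m : (size (P m) = m.+1 /\ P m \is monic) /\
           (size (P m.+1) = m.+2 /\ P m.+1 \is monic) by case: (IH n).
elim: m => [|m [[size_m _] [size_m1 monic_m1]]].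
  by rewrite OP0 OP1 size_poly1 size_XsubC monic1 monicXsubC.
split=> //; rewrite OPSS; set M := _ * P m.+1.
have size_M : size M = m.+3.
  by rewrite size_monicM ?monicXsubC ?monic_neq0 // size_XsubC size_m1.
have size_rest : (size (- (beta m.+1 *: P m)) < size M)%N.
  by rewrite size_polyN size_M (leq_ltn_trans (size_scale_leq _ _)) // size_m.
rewrite size_polyDl // monicE lead_coefDl // size_M -monicE.
by rewrite monicMl ?monicXsubC.
Qed.

Lemma coef_OP_gt n j : (n < j)%N -> (P n)`_j = 0.
Proof. by case: (OP_size_monic n) => size_n _ lt_nj; rewrite nth_default // size_n. Qed.

Lemma coef_OP_diag n : (P n)`_n = 1.
Proof.
by case: (OP_size_monic n) => size_n /monicP; rewrite lead_coefE size_n.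
Qed.

End ThreeTermRecurrence.

Section Chebyshev.
Variables (R : realType) (a b : R).

Lemma Ushift0 : Ushift a b 0 = 1.
Proof. by rewrite /Ushift /Ucheb2 /= comp_polyC. Qed.

Lemma Ushift1 : Ushift a b 1 = 'X - a%:P.
Proof. by rewrite /Ushift /Ucheb2 /= scaler0 subr0 mulr1 comp_polyX. Qed.

Lemma UshiftSS n :
  Ushift a b n.+2 = ('X - a%:P) * Ushift a b n.+1 - b *: Ushift a b n.
Proof.
have UchebSS : Ucheb2 b n.+2 = 'X * Ucheb2 b n.+1 - b *: Ucheb2 b n.
  by rewrite /Ucheb2 /=; case: (Upair b n).
by rewrite /Ushift UchebSS comp_polyB comp_polyM comp_polyZ comp_polyX.
Qed.

Definition cheb_denom : fps {poly R} := quad 1 (a%:P - 'X) b%:P.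

Definition Ugen : fps {poly R} := Ushift a b.

Lemma Ugen_cheb_denom : Ugen * cheb_denom = 1.
Proof.
apply: funext => -[|[|n]];
  rewrite fps_coef1 ?coef_mul_quad0 ?coef_mul_quad1 ?coef_mul_quadSS /Ugen /=.
- by rewrite Ushift0 mulr1.
- by rewrite Ushift0 Ushift1 mulr1 mul1r addrC subrKA subrr.
- by rewrite UshiftSS mulr1 mulrC -mul_polyC; ring.
Qed.

End Chebyshev.

Section ConstantParameters.
Variables (R : realType) (alpha beta : nat -> R) (a a' b b' : R).
Local Notation P := (OP alpha beta).

Definition const_after_first : Prop :=
  forall n, (1 <= n)%N ->
    alpha n = a - (n == 1%N)%:R * a' /\ beta n = b - (n == 1%N)%:R * b'.

Hypothesis params : const_after_first.

Lemma const_after_first1 : alpha 1%N = a - a' /\ beta 1%N = b - b'.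
Proof. by have [-> ->] := params (leqnn 1); rewrite eqxx /= !mul1r. Qed.

Lemma const_after_firstSS n : alpha n.+2 = a /\ beta n.+2 = b.
Proof. by have [-> ->] := params (isT : (1 <= n.+2)%N); rewrite /= !mul0r !subr0. Qed.

Definition Hnumer : fps R := quad 1 a' b'.

Lemma Hgen_cheb_denom : Hgen alpha beta * cheb_denom a b = fps_map polyC Hnumer.
Proof.
have [alpha1 beta1] := const_after_first1.
apply: funext => -[|[|n]];
  rewrite ?coef_mul_quad0 ?coef_mul_quad1 ?coef_mul_quadSS fps_map_quad /Hgen /=.
- by rewrite mulr1.
- by rewrite OP1 OP0 alpha1 mulr1 mul1r polyCB; ring.
rewrite OPSS (const_after_firstSS n).1 mulr1 mulrC -mul_polyC.
case: n => [|n]; rewrite /quad /=.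
  by rewrite beta1 OP0 polyCB; ring.
by rewrite (const_after_firstSS n).2 nth_nil; ring.
Qed.

Lemma Hgen_Ugen : Hgen alpha beta = fps_map polyC Hnumer * Ugen a b.
Proof.
by rewrite -Hgen_cheb_denom -mulrA [_ * Ugen a b]mulrC Ugen_cheb_denom mulr1.
Qed.

Lemma OP_Ushift :
  [/\ P 0 = Ushift a b 0,
      P 1 = Ushift a b 1 + a' *: Ushift a b 0 &
      forall n, (1 < n)%N ->
        P n = Ushift a b n + a' *: Ushift a b n.-1 + b' *: Ushift a b n.-2].
Proof.
have PU n : P n = (Ugen a b * quad 1 a'%:P b'%:P) n.
  by rewrite -fps_map_quad mulrC -Hgen_Ugen.
split; first by rewrite PU coef_mul_quad0 mulr1.
  by rewrite PU coef_mul_quad1 mulr1 mulrC mul_polyC.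
case=> [|[|n]] // _; rewrite PU coef_mul_quadSS mulr1.
by rewrite [_ * a'%:P]mulrC [_ * b'%:P]mulrC !mul_polyC.
Qed.

Lemma Hform_of_const_params : exists u g : fps R,
  [/\ u 0%N = 0, u 1%N = 1, g 0%N = 1 & Hform (Hgen alpha beta) u g].
Proof.
pose Ni := fps_inv Hnumer; have NNi : Hnumer * Ni = 1 by apply: fps_mulV.
have Ni0 : Ni 0%N = 1 by apply: fps_inv0.
pose u := Ni * quad 0 1 0; pose g := Ni * quad 1 a b.
exists u, g; split.
- by rewrite /u coef_mul_quad0 mulr0.
- by rewrite /u coef_mul_quad1 Ni0 mulr0 mul1r add0r.
- by rewrite /g coef_mul_quad0 Ni0 mulr1.
rewrite /Hform; have -> : (fun n => (g n)%:P - u n *: 'X) = fps_map polyC Ni * cheb_denom a b.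
  apply: funext => -[|[|n]];
    rewrite /u /g ?coef_mul_quad0 ?coef_mul_quad1 ?coef_mul_quadSS /fps_map /=.
  - by rewrite !mulr0 !mulr1 scale0r subr0.
  - by rewrite !mulr0 !mulr1 add0r polyCD polyCM -mul_polyC; ring.
  - by rewrite !mulr0 !mulr1 !add0r addr0 !polyCD !polyCM -mul_polyC; ring.
change (Hgen alpha beta * (fps_map polyC Ni * cheb_denom a b) = 1).
by rewrite mulrCA Hgen_cheb_denom -rmorphM mulrC NNi rmorph1.
Qed.

End ConstantParameters.

Section HformCoefficients.
Variables (R : realType) (alpha beta : nat -> R) (u g : fps R).
Local Notation P := (OP alpha beta).
Hypotheses (u0 : u 0%N = 0) (u1 : u 1%N = 1) (g0 : g 0%N = 1).
Hypothesis Hgen_form : Hform (Hgen alpha beta) u g.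

Lemma Hform_coef n k : (0 < n)%N ->
  \sum_(i < n.+1) ((P i)`_k.+1 * g (n - i)%N - u (n - i)%N * (P i)`_k) = 0.
Proof.
case: n => // n _; have /(congr1 (fun F : fps {poly R} => (F n.+1)`_k.+1)) := Hgen_form.
rewrite /= /smul coef_sum coef0 => sum0; rewrite -[RHS]sum0; apply: eq_bigr => i _.
by rewrite mulrBr coefB coefMC -scalerAr coefZ coefMX.
Qed.

Lemma Hform_alpha k : alpha k.+2 = g 1%N - u 2%N.
Proof.
have := Hform_coef (n := k.+2) k isT; rewrite 3!big_ord_recr big1 /= => [|i _]; last first.
  by rewrite !coef_OP_gt ?mulr0 ?mul0r ?subrr //; have := ltn_ord i; lia.
have -> : (k.+2 - k = 2)%N by lia.
rewrite subSS subSnn subnn coef_OPSS !coef_OP_diag (coef_OP_gt alpha beta (ltnSn k)).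
by rewrite u0 u1 g0 => sum0; lra.
Qed.

Lemma Hform_beta k : beta k.+2 = g 2%N - u 3%N - u 2%N * (g 1%N - u 2%N).
Proof.
have := Hform_coef (n := k.+3) k isT; rewrite 4!big_ord_recr big1 /= => [|i _]; last first.
  by rewrite !coef_OP_gt ?mulr0 ?mul0r ?subrr //; have := ltn_ord i; lia.
have -> : (k.+3 - k = 3)%N by lia.
have -> : (k.+3 - k.+1 = 2)%N by lia.
rewrite subSS subSnn subnn (coef_OPSS alpha beta k.+1 k) !coef_OPSS !coef_OP_diag.
rewrite (coef_OP_gt alpha beta (ltnSn k)) !Hform_alpha u0 u1 g0 => sum0.
by apply/eqP; rewrite -subr_eq0 -oppr_eq0 -[X in _ == X]sum0; apply/eqP; ring.
Qed.

Lemma Hform_const_params : (forall n, 0 <= beta n) ->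
  exists a a' b b' : R,
    [/\ 0 <= b, 0 <= b - b' & const_after_first alpha beta a a' b b'].
Proof.
move=> beta_ge0; set B := g 2%N - u 3%N - u 2%N * (g 1%N - u 2%N).
exists (g 1%N - u 2%N), (g 1%N - u 2%N - alpha 1%N), B, (B - beta 1%N); split.
- by rewrite /B -(Hform_beta 0).
- by rewrite opprB addrCA subrr addr0.
case=> [|[|n]] // _; first by rewrite /= !mul1r; split; ring.
by rewrite Hform_alpha Hform_beta /= !mul0r !subr0.
Qed.

End HformCoefficients.

Section MomentFunctional.
Variables (R : realType) (m : nat -> R).

Definition Lm (p : {poly R}) : R := \sum_(i < size p) p`_i * m i.

Lemma Lm_widen N (p : {poly R}) : (size p <= N)%N -> Lm p = \sum_(i < N) p`_i * m i.
Proof.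
move=> le_pN; rewrite /Lm (big_ord_widen N (fun i => p`_i * m i) le_pN) big_mkcond.
by apply: eq_bigr => i _; case: ltnP => // le_p_i; rewrite nth_default ?mul0r.
Qed.

Lemma Lm_is_linear : linear_for *%R Lm.
Proof.
move=> c p q; pose N := maxn (size p) (size q).
have le_pN : (size p <= N)%N by apply: leq_maxl.
have le_qN : (size q <= N)%N by apply: leq_maxr.
rewrite (Lm_widen le_pN) (Lm_widen le_qN) (@Lm_widen N); last first.
  by rewrite (leq_trans (size_polyD _ _)) // geq_max (leq_trans (size_scale_leq _ _)).
rewrite mulr_sumr -big_split; apply: eq_bigr => i _.
by rewrite coefD coefZ mulrDl mulrA.
Qed.

HB.instance Definition _ := GRing.isLinear.Build R {poly R} R *%R Lm Lm_is_linear.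

Lemma Lm_Xn k : Lm 'X^k = m k.
Proof.
rewrite /Lm size_polyXn big_ord_recr /= coefXn eqxx mul1r big1 ?add0r // => i _.
by rewrite coefXn /= (ltn_eqF (ltn_ord i)) mul0r.
Qed.

Definition Lm_fps (F : fps {poly R}) : fps R := fun n => Lm (F n).

Lemma Lm_fps_mulC (a : fps R) F : Lm_fps (fps_map polyC a * F) = a * Lm_fps F.
Proof.
apply: funext => n; rewrite /Lm_fps !fps_coefM linear_sum; apply: eq_bigr => i _.
by rewrite /fps_map mul_polyC linearZ.
Qed.

Lemma Lm_fps_geom (t : fps R) : Lm_fps (scomp geom (sC 'X * fps_map polyC t)) = scomp m t.
Proof.
apply: funext => n; rewrite /Lm_fps !coef_scomp linear_sum; apply: eq_bigr => k _.
rewrite exprMn -sCX -rmorphXn coef_sCM /fps_map /geom mul1r.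
by rewrite mulrC mul_polyC linearZ /= Lm_Xn mulrC.
Qed.

End MomentFunctional.

Lemma Hform_moment_scomp (R : realType) (m : nat -> R) (alpha beta : nat -> R)
    (u g : fps R) :
  (forall n, Lm m (OP alpha beta n) = (n == 0%N)%:R) ->
  u 0%N = 0 -> g 0%N = 1 -> Hform (Hgen alpha beta) u g ->
  g = scomp m (u * fps_inv g).
Proof.
(* [H g = 1 / (1 - x t)] with [t = u / g]: apply [L] to the geometric series. *)
move=> L_OP u0 g0 Hgen_form; set t := u * fps_inv g.
have t0 : t 0%N = 0 by rewrite /t fps_coefM big_ord1 u0 mul0r.
have gtu : g * t = u by rewrite /t mulrCA fps_mulV // mulr1.
set w := sC 'X * fps_map polyC t.
have w0 : w 0%N = 0 by rewrite /w coef_sCM /fps_map t0 rmorph0 mulr0.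
have denomE : (fun n => (g n)%:P - u n *: 'X) = fps_map polyC g * (1 - w).
  apply: funext => n; rewrite mulrBr mulr1 mulrCA -rmorphM gtu fps_coefB coef_sCM.
  by rewrite /fps_map mulrC mul_polyC.
have HgE : Hgen alpha beta * fps_map polyC g = scomp geom w.
  have HD : Hgen alpha beta * (fps_map polyC g * (1 - w)) = 1.
    by rewrite -denomE; apply: Hgen_form.
  by rewrite -[LHS]mulr1 -(scomp_geomV w0) mulrA -(mulrA (Hgen _ _)) HD mul1r.
have LmH : Lm_fps m (Hgen alpha beta) = 1 by apply: funext => n; apply: L_OP.
by rewrite -Lm_fps_geom -HgE mulrC Lm_fps_mulC LmH mulr1.
Qed.

Section KTransform.
Variables (R : realType) (m : nat -> R).

Lemma GhatE : Ghat m = sX R * m.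
Proof. by apply: funext => n; rewrite coef_sXM. Qed.

Lemma kser_id (c : fps R) : c 0%N = 1 -> kser c = c.
Proof. by move=> c0; apply: funext => -[|n]. Qed.

Lemma Kcoeffs_exist : m 0%N = 1 -> exists c, is_Kcoeffs m c.
Proof.
move=> m0; have [psi [psi0 Gpsi]] : exists psi : fps R,
    psi 0%N = 1 /\ scomp (Ghat m) (sX R * psi) = sX R by apply: scomp_rinv.
exists (fps_inv psi), psi; split => //.
change (kser (fps_inv psi) * psi = 1).
by rewrite kser_id ?fps_inv0 // mulrC fps_mulV.
Qed.

Lemma scomp_Kcoeffs (u g c : fps R) :
  u 0%N = 0 -> u 1%N = 1 -> g 0%N = 1 -> g = scomp m (u * fps_inv g) ->
  is_Kcoeffs m c -> g = scomp (kser c) u.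
Proof.
move=> u0 u1 g0 g_mt [psi [kpsi Gpsi]].
change (kser c * psi = 1) in kpsi; change (scomp (Ghat m) (sX R * psi) = sX R) in Gpsi.
set t := u * fps_inv g in g_mt.
have t0 : t 0%N = 0 by rewrite /t fps_coefM big_ord1 u0 mul0r.
have Gt : scomp (Ghat m) t = u.
  rewrite GhatE scompM // scompX // -g_mt /t -mulrA [fps_inv g * g]mulrC.
  by rewrite fps_mulV ?mulr1.
have psi0 : psi 0%N = 1.
  by have := congr1 (fun a => a 0%N) kpsi; rewrite fps_coefM big_ord1 mul1r.
set w := sX R * psi.
have w0 : w 0%N = 0 by rewrite /w coef_sXM.
have w1 : w 1%N = 1 by rewrite /w coef_sXM.
have wG : scomp w (Ghat m) = sX R by apply: scomp_linv.
have t_psi : t = u * scomp psi u.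
  by rewrite -[t]scompX // -wG scompA // Gt scompM // scompX.
have inv_psi : fps_inv g = scomp psi u by apply: (order1_mulI u0 u1).
by rewrite -[g]mulr1 -(scomp1 u) -kpsi scompM // -inv_psi mulrCA fps_mulV ?mulr1.
Qed.

End KTransform.

Section Moments.
Variables (R : realType) (P : probability R R).
Hypothesis hmom : forall n : nat, P.-integrable [set: R] (fun x => (x ^+ n)%:E).

Lemma integral_horner (p : {poly R}) :
  (\int[P]_x (p.[x])%:E = (Lm (moment P) p)%:E)%E.
Proof.
under eq_integral => x _ do rewrite horner_coef -sumEFin.
rewrite integral_sum //; last first.
  by move=> i; under eq_fun => x do rewrite EFinM; apply: integrableZl.
rewrite /Lm -sumEFin; apply: eq_bigr => i _.
under eq_integral => x _ do rewrite EFinM.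
by rewrite integralZl // EFinM /moment fineK // integrable_fin_num.
Qed.

Lemma moment0 : moment P 0 = 1.
Proof.
rewrite /moment; under eq_integral => x _ do rewrite expr0.
by rewrite integral_cst // mul1e; exact: (congr1 fine (probability_setT P)).
Qed.

Lemma Lm_OP (alpha beta : nat -> R) :
  (forall n, n <> 0%N ->
     (\int[P]_x (((OP alpha beta n).[x] * (OP alpha beta 0).[x])%:E) = 0)%E) ->
  forall n, Lm (moment P) (OP alpha beta n) = (n == 0%N)%:R.
Proof.
move=> orth [|n]; first by rewrite OP0 -(expr0 'X) Lm_Xn moment0.
have := orth n.+1 (@PeanoNat.Nat.neq_succ_0 n).
under eq_integral => x _ do rewrite OP0 hornerC mulr1.
by rewrite integral_horner => -[].
Qed.

End Moments.

Theorem lemma3p1 (R : realType) (P : probability R R)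
  (alpha beta : nat -> R)
  (hmom : forall n : nat, P.-integrable [set: R] (fun x => (x ^+ n)%:E))
  (hbeta : forall n : nat, 0 <= beta n)
  (horth : forall n k : nat, n <> k ->
     (\int[P]_x (((OP alpha beta n).[x] * (OP alpha beta k).[x])%:E) = 0)%E) :
  (* (1) *)
  ((exists u g : fps R,
      [/\ u 0%N = 0, u 1%N = 1, g 0%N = 1 & Hform (Hgen alpha beta) u g])
   <->
   (exists a a' b b' : R,
      [/\ 0 <= b, 0 <= b - b' &
          forall n : nat, (1 <= n)%N ->
            alpha n = a - (n == 1%N)%:R * a' /\ beta n = b - (n == 1%N)%:R * b']))
  /\
  (* (2) f = K_nu o u, i.e. u f = u (K_nu o u) = kser c o u *)
  (forall u g : fps R,
      u 0%N = 0 -> u 1%N = 1 -> g 0%N = 1 -> Hform (Hgen alpha beta) u g ->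
      (exists c, is_Kcoeffs (moment P) c) /\
      (forall c, is_Kcoeffs (moment P) c -> g = scomp (kser c) u))
  /\
  (* (3) *)
  (forall a a' b b' : R,
      0 <= b -> 0 <= b - b' ->
      (forall n : nat, (1 <= n)%N ->
         alpha n = a - (n == 1%N)%:R * a' /\ beta n = b - (n == 1%N)%:R * b') ->
      [/\ OP alpha beta 0 = Ushift a b 0,
          OP alpha beta 1 = Ushift a b 1 + a' *: Ushift a b 0 &
          forall n : nat, (1 < n)%N ->
            OP alpha beta n = Ushift a b n + a' *: Ushift a b n.-1
                              + b' *: Ushift a b n.-2]).
Proof.
have Lm_P := Lm_OP hmom (fun n n0 => horth n 0%N n0).
split; [split|split].
- by move=> [u [g [u0 u1 g0 Hg]]]; apply: Hform_const_params u0 u1 g0 Hg hbeta.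
- by move=> [a [a' [b [b' [_ _ params]]]]]; apply: Hform_of_const_params params.
- move=> u g u0 u1 g0 Hg; split; first exact/Kcoeffs_exist/moment0.
  by move=> c; apply: scomp_Kcoeffs => //; apply: Hform_moment_scomp Lm_P _ _ Hg.
- by move=> a a' b b' _ _; apply: OP_Ushift.
Qed.
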